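(* Consider a cryptomining facility with two machine types of capacities $c_1^M,c_2^M>0$ and per-unit mining rewards $r_1<r_2$, participating in a reg-up program with committed capacity $c_1\ge0$ and price $p_1$ and a reg-down program with committed capacity $c_2\ge 0$ and price $p_2$, with $c_1+c_2\le c_1^M+c_2^M$. For deployment ratios $(\epsilon_1,\epsilon_2)\in[0,1]^2$ let $L=\epsilon_1c_1+(1-\epsilon_2)c_2$ and $$\mathrm{cost}_{reg}(\epsilon,c)=\begin{cases} r_1L-p_1c_1-p_2c_2 & \text{if } L\le c_1^M,\\ r_2L+(r_1-r_2)c_1^M-p_1c_1-p_2c_2 & \text{otherwise.}\end{cases}$$ Let $\theta\in[0,1]$, $\lambda_1,\lambda_2>0$, and suppose $(\epsilon_1,\epsilon_2)$ has joint density $$\theta\,\delta(\epsilon_1)\frac{\lambda_2e^{-\lambda_2\epsilon_2}}{1-e^{-\lambda_2}}+(1-\theta)\,\delta(\epsilon_2)\frac{\lambda_1e^{-\lambda_1\epsilon_1}}{1-e^{-\lambda_1}}\qquad\text{on }[0,1]^2.$$ For $j=1,2$ write $\bar\epsilon_j=\frac{1-(\lambda_j+1)e^{-\lambda_j}}{\lambda_j(1-e^{-\lambda_j})}$. Then $$\mathbb{E}_\epsilon[\mathrm{cost}_{reg}(\epsilon,c)]=\begin{cases}Q_1 & \text{if } c_1+c_2<c_1^M,\\ Q_2 & \text{if } c_2\ge c_1^M,\\ Q_3 & \text{otherwise,}\end{cases}$$ where $$Q_1=c_1\big[(1-\theta)r_1\bar\epsilon_1-p_1\big]+c_2\big[r_1(1-\theta\bar\epsilon_2)-p_2\big],$$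 $$Q_2=Q_1+(r_1-r_2)\Big(\theta\,\frac{\lambda_2c_1^M+c_2\big(1-\lambda_2-e^{-\lambda_2(1-c_1^M/c_2)}\big)}{\lambda_2(1-e^{-\lambda_2})}+(1-\theta)\big[c_1^M-c_2-c_1\bar\epsilon_1\big]\Big),$$ $$Q_3=Q_1+(r_1-r_2)(1-\theta)\,\frac{\lambda_1(c_2-c_1^M)+c_1\big(1+\lambda_1-e^{-\lambda_1(c_1^M-c_1-c_2)/c_1}\big)}{\lambda_1(e^{\lambda_1}-1)}.$$
   Context: $\epsilon_1$ is the deployment ratio of reg-up (load reduction $\epsilon_1c_1$) and $\epsilon_2$ that of reg-down; a facility committing $c_2$ to reg-down lowers its operating point by $c_2$ and, when deployed with ratio $\epsilon_2$, its load reduction is $(1-\epsilon_2)c_2$. The quantities $\bar\epsilon_j$ are the means of the truncated exponential distributions with parameters $\lambda_j$ on $[0,1]$ (written $\mathbb{E}[\epsilon_j]$ in the paper). $\delta$ is the Dirac delta: with probability $\theta$ only reg-down is deployed ($\epsilon_1=0$), otherwise only reg-up ($\epsilon_2=0$). *)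

From Stdlib Require Import Reals.
From Coquelicot Require Import Coquelicot.
Open Scope R_scope.

Definition load_red (e1 e2 c1 c2 : R) : R := e1 * c1 + (1 - e2) * c2.

Definition cost_reg (r1 r2 p1 p2 cM1 : R) (e1 e2 c1 c2 : R) : R :=
  let L := load_red e1 e2 c1 c2 in
  if Rle_dec L cM1 then r1 * L - p1 * c1 - p2 * c2
  else r2 * L + (r1 - r2) * cM1 - p1 * c1 - p2 * c2.

Definition trunc_exp_pdf (lam x : R) : R :=
  lam * exp (- lam * x) / (1 - exp (- lam)).

(* Expectation of a function g of (eps1, eps2) under the joint density
   theta * delta(eps1) * f_2(eps2) + (1 - theta) * delta(eps2) * f_1(eps1)
   on [0,1]^2: integrating out the Dirac deltas. *)
Definition expect_mix (theta lam1 lam2 : R) (g : R -> R -> R) : R :=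
  theta * RInt (fun e2 => g 0 e2 * trunc_exp_pdf lam2 e2) 0 1
  + (1 - theta) * RInt (fun e1 => g e1 0 * trunc_exp_pdf lam1 e1) 0 1.

(* bar eps_j (mean of the truncated exponential), as given in the paper *)
Definition eps_bar (lam : R) : R :=
  (1 - (lam + 1) * exp (- lam)) / (lam * (1 - exp (- lam))).

(* The cost is affine in the load reduction L plus the hinge (r2 - r1) (L - cM1)^+.
   Under the mixture, L is affine along each of the two deployment branches, so the
   affine part integrates to Q1 through the means eps_bar, and only the hinge depends
   on the regime.  Along the reg-down branch L = (1 - e2) c2 crosses cM1 at
   e2 = 1 - cM1/c2, along the reg-up branch L = c2 + c1 e1 crosses it at
   e1 = (cM1 - c2)/c1; in each regime the hinge is affine or zero on the two sides of
   the crossing, and (al + be x) lam e^(-lam x) has an explicit primitive. *)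
From Stdlib Require Import Reals Lra Psatz.
From Coquelicot Require Import Coquelicot.
Open Scope R_scope.

Definition affine_trunc_exp_primitive (lam al be x : R) : R :=
  - (al + be * x + be / lam) * exp (- lam * x) / (1 - exp (- lam)).

Lemma trunc_exp_norm_neq0 (lam : R) : 0 < lam -> 1 - exp (- lam) <> 0.
Proof.
  intros Hlam.
  assert (exp (- lam) < 1) by (rewrite <- exp_0; apply exp_increasing; lra).
  lra.
Qed.

Lemma is_RInt_affine_trunc_exp (lam al be u v : R) : 0 < lam ->
  is_RInt (fun x => (al + be * x) * trunc_exp_pdf lam x) u v
    (affine_trunc_exp_primitive lam al be v - affine_trunc_exp_primitive lam al be u).
Proof.
  intros Hlam. pose proof (trunc_exp_norm_neq0 lam Hlam) as Hnorm.
  apply (is_RInt_derive (affine_trunc_exp_primitive lam al be)).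
  - intros x _. unfold affine_trunc_exp_primitive, trunc_exp_pdf.
    auto_derive; [easy | field; lra].
  - intros x _. apply (ex_derive_continuous (V := R_CompleteNormedModule)).
    unfold trunc_exp_pdf. auto_derive. easy.
Qed.

Lemma is_RInt_trunc_exp_affine_on (lam al be u v : R) (g : R -> R) : 0 < lam -> u <= v ->
  (forall x, u < x < v -> g x = al + be * x) ->
  is_RInt (fun x => g x * trunc_exp_pdf lam x) u v
    (affine_trunc_exp_primitive lam al be v - affine_trunc_exp_primitive lam al be u).
Proof.
  intros Hlam Huv Hg.
  apply (is_RInt_ext (fun x => (al + be * x) * trunc_exp_pdf lam x)).
  - intros x. rewrite Rmin_left, Rmax_right by exact Huv. intros Hx. now rewrite Hg.
  - now apply is_RInt_affine_trunc_exp.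
Qed.

Lemma is_RInt_trunc_exp_zero_on (lam u v : R) (g : R -> R) : u <= v ->
  (forall x, u < x < v -> g x = 0) ->
  is_RInt (fun x => g x * trunc_exp_pdf lam x) u v 0.
Proof.
  intros Huv Hg. apply (is_RInt_ext (fun _ => 0)).
  - intros x. rewrite Rmin_left, Rmax_right by exact Huv. intros Hx.
    now rewrite (Hg x Hx), Rmult_0_l.
  - pose proof (is_RInt_const u v 0) as Hconst.
    change (is_RInt (fun _ : R => 0) u v ((v - u) * 0)) in Hconst.
    now rewrite Rmult_0_r in Hconst.
Qed.

Lemma is_RInt_trunc_exp_mean (lam al be : R) (g : R -> R) : 0 < lam ->
  (forall x, 0 < x < 1 -> g x = al + be * x) ->
  is_RInt (fun x => g x * trunc_exp_pdf lam x) 0 1 (al + be * eps_bar lam).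
Proof.
  intros Hlam Hg. pose proof (trunc_exp_norm_neq0 lam Hlam) as Hnorm.
  replace (al + be * eps_bar lam) with
    (affine_trunc_exp_primitive lam al be 1 - affine_trunc_exp_primitive lam al be 0).
  - apply is_RInt_trunc_exp_affine_on; [exact Hlam | lra | exact Hg].
  - unfold affine_trunc_exp_primitive, eps_bar.
    rewrite !Rmult_0_r, exp_0, !Rmult_1_r. field. lra.
Qed.

Lemma cost_reg_hinge (r1 r2 p1 p2 cM1 e1 e2 c1 c2 : R) :
  cost_reg r1 r2 p1 p2 cM1 e1 e2 c1 c2 =
  r1 * load_red e1 e2 c1 c2 - p1 * c1 - p2 * c2
  + (r2 - r1) * Rmax 0 (load_red e1 e2 c1 c2 - cM1).
Proof.
  unfold cost_reg, Rmax. set (L := load_red e1 e2 c1 c2).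
  destruct (Rle_dec L cM1), (Rle_dec 0 (L - cM1)); try lra.
  replace (L - cM1) with 0 by lra. ring.
Qed.

Lemma is_RInt_trunc_exp_affine_plus (lam al be k X : R) (h g : R -> R) : 0 < lam ->
  is_RInt (fun x => h x * trunc_exp_pdf lam x) 0 1 X ->
  (forall x, 0 < x < 1 -> g x = al + be * x + k * h x) ->
  is_RInt (fun x => g x * trunc_exp_pdf lam x) 0 1 (al + be * eps_bar lam + k * X).
Proof.
  intros Hlam HX Hg.
  apply (is_RInt_ext (fun x => (al + be * x) * trunc_exp_pdf lam x
                               + scal k (h x * trunc_exp_pdf lam x))).
  - intros x. rewrite Rmin_left, Rmax_right by lra. intros Hx.
    rewrite (Hg x Hx). unfold scal; simpl; unfold mult; simpl. ring.
  - apply (is_RInt_plus (V := R_CompleteNormedModule)).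
    + now apply is_RInt_trunc_exp_mean.
    + now apply (is_RInt_scal (V := R_CompleteNormedModule)).
Qed.

Lemma expect_mix_cost_reg (r1 r2 p1 p2 cM1 c1 c2 theta lam1 lam2 X1 X2 : R) :
  0 < lam1 -> 0 < lam2 ->
  is_RInt (fun e2 => Rmax 0 ((1 - e2) * c2 - cM1) * trunc_exp_pdf lam2 e2) 0 1 X2 ->
  is_RInt (fun e1 => Rmax 0 (c2 + c1 * e1 - cM1) * trunc_exp_pdf lam1 e1) 0 1 X1 ->
  expect_mix theta lam1 lam2 (fun e1 e2 => cost_reg r1 r2 p1 p2 cM1 e1 e2 c1 c2) =
  c1 * ((1 - theta) * r1 * eps_bar lam1 - p1) + c2 * (r1 * (1 - theta * eps_bar lam2) - p2)
  + (r2 - r1) * (theta * X2 + (1 - theta) * X1).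
Proof.
  intros Hlam1 Hlam2 HX2 HX1. unfold expect_mix.
  set (a0 := r1 * c2 - p1 * c1 - p2 * c2).
  assert (Hdown : forall x, 0 < x < 1 -> cost_reg r1 r2 p1 p2 cM1 0 x c1 c2 =
    a0 + - r1 * c2 * x + (r2 - r1) * Rmax 0 ((1 - x) * c2 - cM1)).
  { intros x _. rewrite cost_reg_hinge. unfold load_red, a0.
    replace (0 * c1 + (1 - x) * c2) with ((1 - x) * c2) by ring. ring. }
  assert (Hup : forall x, 0 < x < 1 -> cost_reg r1 r2 p1 p2 cM1 x 0 c1 c2 =
    a0 + r1 * c1 * x + (r2 - r1) * Rmax 0 (c2 + c1 * x - cM1)).
  { intros x _. rewrite cost_reg_hinge. unfold load_red, a0.
    replace (x * c1 + (1 - 0) * c2) with (c2 + c1 * x) by ring. ring. }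
  rewrite (is_RInt_unique _ _ _ _ (is_RInt_trunc_exp_affine_plus _ _ _ _ _ _ _ Hlam2 HX2 Hdown)).
  rewrite (is_RInt_unique _ _ _ _ (is_RInt_trunc_exp_affine_plus _ _ _ _ _ _ _ Hlam1 HX1 Hup)).
  unfold a0. ring.
Qed.

Lemma is_RInt_hinge_down_crossing (lam c2 cM1 : R) : 0 < lam -> 0 < cM1 <= c2 ->
  is_RInt (fun x => Rmax 0 ((1 - x) * c2 - cM1) * trunc_exp_pdf lam x) 0 1
    (- ((lam * cM1 + c2 * (1 - lam - exp (- lam * (1 - cM1 / c2))))
        / (lam * (1 - exp (- lam))))).
Proof.
  intros Hlam [HcM1 Hc2]. pose proof (trunc_exp_norm_neq0 lam Hlam) as Hnorm.
  set (a := 1 - cM1 / c2).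
  assert (Ha : a * c2 = c2 - cM1) by (unfold a; field; lra).
  assert (Ha01 : 0 <= a <= 1) by (split; nra).
  set (P := affine_trunc_exp_primitive lam (c2 - cM1) (- c2)).
  replace (- _) with (P a - P 0 + 0).
  - apply (is_RInt_Chasles (V := R_CompleteNormedModule) _ 0 a 1).
    + apply is_RInt_trunc_exp_affine_on; [exact Hlam | lra |].
      intros x Hx. rewrite Rmax_right by nra. ring.
    + apply is_RInt_trunc_exp_zero_on; [lra |].
      intros x Hx. apply Rmax_left. nra.
  - unfold P, affine_trunc_exp_primitive, a.
    rewrite !Rmult_0_r, exp_0. field. lra.
Qed.

Lemma is_RInt_hinge_up_crossing (lam c1 c2 cM1 : R) : 0 < lam ->
  c2 < cM1 <= c1 + c2 ->
  is_RInt (fun x => Rmax 0 (c2 + c1 * x - cM1) * trunc_exp_pdf lam x) 0 1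
    (- ((lam * (c2 - cM1) + c1 * (1 + lam - exp (- lam * (cM1 - c1 - c2) / c1)))
        / (lam * (exp lam - 1)))).
Proof.
  intros Hlam [Hc2 Hc12]. pose proof (trunc_exp_norm_neq0 lam Hlam) as Hnorm.
  assert (Hc1 : 0 < c1) by lra.
  set (b := (cM1 - c2) / c1).
  assert (Hb : b * c1 = cM1 - c2) by (unfold b; field; lra).
  assert (Hb01 : 0 <= b <= 1) by (split; nra).
  set (P := affine_trunc_exp_primitive lam (c2 - cM1) c1).
  replace (- _) with (0 + (P 1 - P b)).
  - apply (is_RInt_Chasles (V := R_CompleteNormedModule) _ 0 b 1).
    + apply is_RInt_trunc_exp_zero_on; [lra |].
      intros x Hx. apply Rmax_left. nra.
    + apply is_RInt_trunc_exp_affine_on; [exact Hlam | lra |].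
      intros x Hx. rewrite Rmax_right by nra. ring.
  - assert (Eb : exp (- lam * b) = exp (- lam * (cM1 - c1 - c2) / c1) * exp (- lam)).
    { rewrite <- exp_plus. f_equal. unfold b. field. lra. }
    assert (El : exp lam = / exp (- lam)) by now rewrite exp_Ropp, Rinv_inv.
    assert (Hpos : 0 < exp (- lam)) by apply exp_pos.
    unfold P, affine_trunc_exp_primitive.
    rewrite !Rmult_1_r, Eb, El. unfold b.
    set (Y := exp (- lam * (cM1 - c1 - c2) / c1)) in *.
    set (X := exp (- lam)) in *. clearbody X Y.
    field. repeat split; lra.
Qed.

Theorem theorem3 (cM1 cM2 r1 r2 p1 p2 c1 c2 theta lam1 lam2 : R) :
  0 < cM1 -> 0 < cM2 -> r1 < r2 ->
  0 <= c1 -> 0 <= c2 -> c1 + c2 <= cM1 + cM2 ->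
  0 <= theta <= 1 -> 0 < lam1 -> 0 < lam2 ->
  let Q1 := c1 * ((1 - theta) * r1 * eps_bar lam1 - p1)
            + c2 * (r1 * (1 - theta * eps_bar lam2) - p2) in
  let Q2 := Q1 + (r1 - r2) *
      (theta * ((lam2 * cM1 + c2 * (1 - lam2 - exp (- lam2 * (1 - cM1 / c2))))
                / (lam2 * (1 - exp (- lam2))))
       + (1 - theta) * (cM1 - c2 - c1 * eps_bar lam1)) in
  let Q3 := Q1 + (r1 - r2) * (1 - theta) *
      ((lam1 * (c2 - cM1) + c1 * (1 + lam1 - exp (- lam1 * (cM1 - c1 - c2) / c1)))
       / (lam1 * (exp lam1 - 1))) in
  expect_mix theta lam1 lam2 (fun e1 e2 => cost_reg r1 r2 p1 p2 cM1 e1 e2 c1 c2)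
  = (if Rlt_dec (c1 + c2) cM1 then Q1
     else if Rge_dec c2 cM1 then Q2
     else Q3).
Proof.
  intros HcM1 _ _ Hc1 Hc2 _ _ Hlam1 Hlam2 Q1 Q2 Q3.
  assert (Hdown_zero : c2 <= cM1 ->
    is_RInt (fun x => Rmax 0 ((1 - x) * c2 - cM1) * trunc_exp_pdf lam2 x) 0 1 0).
  { intros Hc2M. apply is_RInt_trunc_exp_zero_on; [lra |].
    intros x Hx. apply Rmax_left. nra. }
  destruct (Rlt_dec (c1 + c2) cM1) as [Hbelow | Hbelow];
    [| destruct (Rge_dec c2 cM1) as [Hc2M | Hc2M]].
  - rewrite (expect_mix_cost_reg _ _ _ _ _ _ _ _ _ _ 0 0 Hlam1 Hlam2).
    + unfold Q1. ring.
    + apply Hdown_zero. lra.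
    + apply is_RInt_trunc_exp_zero_on; [lra |].
      intros x Hx. apply Rmax_left. nra.
  - rewrite (expect_mix_cost_reg _ _ _ _ _ _ _ _ _ _ (c2 - cM1 + c1 * eps_bar lam1) _
      Hlam1 Hlam2 (is_RInt_hinge_down_crossing lam2 c2 cM1 Hlam2 ltac:(lra))).
    + unfold Q2, Q1. ring.
    + apply is_RInt_trunc_exp_mean; [exact Hlam1 |].
      intros x Hx. rewrite Rmax_right by nra. ring.
  - rewrite (expect_mix_cost_reg _ _ _ _ _ _ _ _ _ _ _ 0 Hlam1 Hlam2
      (Hdown_zero ltac:(lra)) (is_RInt_hinge_up_crossing lam1 c1 c2 cM1 Hlam1 ltac:(lra))).
    unfold Q3, Q1. ring.
Qed.
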